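(* Let $G$ be a connected graph and let $H$ be a hypergraph of degree 2. If $G$ is a minor of $H^d$, then $G^d$ is a hypergraph dilution of $H$.
   Context: A hypergraph $H$ is a pair $(V(H),E(H))$ with $E(H)\subseteq 2^{V(H)}$ a set; graphs are hypergraphs all of whose edges have size 2. For a vertex $v$, $I_v$ is the set of edges containing $v$; the degree of $H$ is $\max_v |I_v|$. The dual $H^d$ of $H$ has $V(H^d)=E(H)$ and $E(H^d)=\{I_v : v\in V(H)\}$. A graph $G$ is a minor of a hypergraph $F$ if it is a minor of the primal graph of $F$ (vertices $V(F)$, with $x,y$ adjacent iff some edge of $F$ contains both), i.e., there is $\mu: V(G)\to 2^{V(F)}$ with each $\mu(v)$ connected, the $\mu(v)$ pairwise disjoint, and for adjacent $u,v$ in $G$ some primal edge joins $\mu(u)$ and $\mu(v)$. $H$ is a hypergraph dilution of $H'$ if $H$ is isomorphic to a hypergraph reachable from $H'$ by a finite sequence of: deleting a vertex (from the vertex set and all edges); deleting an edge that is a proper subset of another edge; merging on a vertex $v$, i.e., replacing all edges of $I_v$ by the single edge $(\bigcup I_v)\setminus\{v\}$. *)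

From mathcomp Require Import all_boot.
Set Implicit Arguments. Unset Strict Implicit. Unset Printing Implicit Defensive.

Record hypergraph (T : finType) := Hypergraph { hV : {set T}; hE : {set {set T}} }.

Definition wf (T : finType) (H : hypergraph T) : Prop :=
  forall e, e \in hE H -> e \subset hV H.

Definition incid (T : finType) (H : hypergraph T) (v : T) : {set {set T}} :=
  [set e in hE H | v \in e].

Definition degree (T : finType) (H : hypergraph T) : nat :=
  \max_(v in hV H) #|incid H v|.

Definition is_graph (T : finType) (H : hypergraph T) : Prop :=
  wf H /\ forall e, e \in hE H -> #|e| = 2.

Definition dual (T : finType) (H : hypergraph T) : hypergraph {set T} :=
  Hypergraph (hE H) [set incid H v | v in hV H].

Definition primal_adj (T : finType) (H : hypergraph T) : rel T :=
  fun x y => (x != y) && [exists e in hE H, (x \in e) && (y \in e)].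

Definition connected_set (T : finType) (H : hypergraph T) (X : {set T}) : Prop :=
  X != set0 /\
  forall x y, x \in X -> y \in X ->
    connect (fun a b => [&& a \in X, b \in X & primal_adj H a b]) x y.

Definition connected (T : finType) (H : hypergraph T) : Prop :=
  connected_set H (hV H).

Definition minor (T U : finType) (G : hypergraph T) (F : hypergraph U) : Prop :=
  exists mu : T -> {set U},
    [/\ forall v, v \in hV G -> mu v \subset hV F,
        forall v, v \in hV G -> connected_set F (mu v),
        forall u v, u \in hV G -> v \in hV G -> u != v -> [disjoint mu u & mu v] &
        forall u v, u \in hV G -> v \in hV G -> primal_adj G u v ->
          exists x y, [/\ x \in mu u, y \in mu v & primal_adj F x y]].

Inductive dil_step (T : finType) : hypergraph T -> hypergraph T -> Prop :=
| DelVertex (H : hypergraph T) (v : T) : v \in hV H ->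
    dil_step H (Hypergraph (hV H :\ v) [set e :\ v | e in hE H])
| DelEdge (H : hypergraph T) (e f : {set T}) : e \in hE H -> f \in hE H -> e \proper f ->
    dil_step H (Hypergraph (hV H) (hE H :\ e))
| Merge (H : hypergraph T) (v : T) : v \in hV H ->
    dil_step H (Hypergraph (hV H)
      ((hE H :\: incid H v) :|: [set (\bigcup_(e in incid H v) e) :\ v])).

Inductive dil_reach (T : finType) : hypergraph T -> hypergraph T -> Prop :=
| DR_refl (H : hypergraph T) : dil_reach H H
| DR_step (H1 H2 H3 : hypergraph T) : dil_step H1 H2 -> dil_reach H2 H3 -> dil_reach H1 H3.

Definition iso (T U : finType) (H1 : hypergraph T) (H2 : hypergraph U) : Prop :=
  exists f : T -> U,
    [/\ {in hV H1 &, injective f}, f @: hV H1 = hV H2 &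
        [set f @: (e : {set T}) | e in hE H1] = hE H2].

Definition dilution (T U : finType) (H' : hypergraph U) (H : hypergraph T) : Prop :=
  exists H'' : hypergraph T, dil_reach H H'' /\ iso H'' H'.

From mathcomp Require Import all_boot.
Set Implicit Arguments. Unset Strict Implicit. Unset Printing Implicit Defensive.

(* Let mu be the branch sets of the minor: mu u is a connected set of edges of H.
   Call a vertex of H internal if all its edges lie in one branch set. Merging H at
   every internal vertex glues each mu u into a single edge: two edges of mu u that
   meet do so at a vertex which, H having degree at most 2, has no further edge and
   is therefore internal. For an edge uw of G the minor provides a vertex z of H on
   an edge of mu u and on an edge of mu w (its only two edges); keep one such vertex
   per edge of G and delete all other vertices. What remains of mu u is the set of
   kept vertices standing for the edges of G at u, so z |-> {u, w} is an isomorphism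
   onto G^d, once the edges of H outside all branch sets, which have become empty,
   are deleted as proper subsets of another edge. *)

Lemma dil_reach_trans (T : finType) (A B C : hypergraph T) :
  dil_reach A B -> dil_reach B C -> dil_reach A C.
Proof. by elim=> // H1 H2 H3 s _ IH /IH; apply: DR_step. Qed.

Lemma dil_step_reach (T : finType) (A B : hypergraph T) :
  dil_step A B -> dil_reach A B.
Proof. by move=> s; apply: DR_step s (DR_refl _). Qed.

Lemma dil_reach_drop_empty_edge (T : finType) (V : {set T}) (E B : {set {set T}}) :
  B \subset E -> E :\ set0 \subset B -> B != set0 ->
  dil_reach (Hypergraph V E) (Hypergraph V B).
Proof.
move=> BE EB /set0Pn [f fB].
have [/andP [E0 B0] | keep] := boolP ((set0 \in E) && (set0 \notin B)).
  have -> : B = E :\ set0.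
    by apply/eqP; rewrite eqEsubset EB subsetD1 BE B0.
  apply: dil_step_reach; apply: (DelEdge (f := f)) => //; first exact: (subsetP BE).
  by rewrite proper0; apply: contraNneq B0 => <-.
suff -> : E = B by apply: DR_refl.
apply/eqP; rewrite eqEsubset BE andbT; apply/subsetP=> e eE.
have [e0 | ne0] := eqVneq e set0; last by apply: (subsetP EB); rewrite !inE ne0.
by move: keep; rewrite -e0 eE /= negbK.
Qed.

Section GroupedHypergraph.

Variable U : finType.
Implicit Types (W : {set U}) (g : {set {set U}}) (P : {set {set {set U}}}).

(* The hypergraphs met along the dilution keep the vertices [W] and a partition [P]
   of the original edges; a block [g] has been merged into the edge [group_edge W g]. *)
Definition group_edge W g : {set U} := cover g :&: W.

Definition grouped W P : hypergraph U :=
  Hypergraph W [set group_edge W g | g in P].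

Lemma group_edgeD1 W g x : group_edge (W :\ x) g = group_edge W g :\ x.
Proof. exact: setIDA. Qed.

Lemma mem_group_edge W g x : x \in W -> (x \in group_edge W g) = (x \in cover g).
Proof. by move=> xW; rewrite inE xW andbT. Qed.

Lemma grouped_singletons (H : hypergraph U) :
  wf H -> grouped (hV H) [set [set e] | e in hE H] = H.
Proof.
case: H => V E wfH; rewrite /grouped /=; congr Hypergraph.
rewrite -imset_comp -[RHS]imset_id; apply: eq_in_imset => e eE /=.
by rewrite /group_edge cover1; apply/setIidPl; apply: wfH.
Qed.

Lemma dil_step_grouped_del W P x :
  x \in W -> dil_step (grouped W P) (grouped (W :\ x) P).
Proof.
move=> xW; have -> : grouped (W :\ x) P =
    Hypergraph (hV (grouped W P) :\ x) [set e :\ x | e in hE (grouped W P)].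
  rewrite /grouped /= -imset_comp; congr Hypergraph.
  by apply: eq_imset => g; apply: group_edgeD1.
exact: DelVertex.
Qed.

Lemma dil_reach_grouped_sub W W' P :
  W' \subset W -> dil_reach (grouped W P) (grouped W' P).
Proof.
have [n] := ubnP #|W :\: W'|; elim: n W => // n IH W ltDn sW'W.
have [/eqP D0 | [x]] := set_0Vmem (W :\: W').
  suff -> : W = W' by apply: DR_refl.
  by apply/eqP; rewrite eqEsubset sW'W andbT -setD_eq0 D0.
rewrite inE => /andP [xW' xW].
apply: DR_step (dil_step_grouped_del P xW) (IH _ _ _).
- by move: ltDn; rewrite (cardsD1 x) inE xW' xW setDDl setUC -setDDl.
- by rewrite subsetD1 sW'W.
Qed.

Definition touching P x := [set g in P | x \in cover g].

Definition merge_at P x := (P :\: touching P x) :|: [set cover (touching P x)].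

Lemma in_merge_at P x g :
  (g \in merge_at P x) = (g == cover (touching P x)) || (g \in P) && (x \notin cover g).
Proof. by rewrite !inE orbC andbC negb_and; case: (g \in P). Qed.

Lemma bigcup_group_edges W (A : {set {set {set U}}}) :
  \bigcup_(e in [set group_edge W g | g in A]) e = group_edge W (cover A).
Proof.
apply/setP=> y; rewrite inE; apply/bigcupP/andP.
- case=> _ /imsetP [g gA ->] /[!inE] /andP [/bigcupP [e eg ye] yW]; split=> //.
  by apply/bigcupP; exists e => //; apply/bigcupP; exists g.
- case=> /bigcupP [e /bigcupP [g gA eg] ye] yW.
  exists (group_edge W g); first exact: imset_f.
  by rewrite inE yW andbT; apply/bigcupP; exists e.
Qed.

Lemma incid_grouped W P x :
  x \in W -> incid (grouped W P) x = [set group_edge W g | g in touching P x].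
Proof.
move=> xW; apply/setP=> e; rewrite inE; apply/andP/imsetP.
- by case=> /imsetP [g gP ->]; rewrite mem_group_edge // => xg; exists g; rewrite ?inE ?gP.
- case=> g /[!inE] /andP [gP xg] ->.
  by split; [apply: imset_f | rewrite mem_group_edge].
Qed.

Lemma grouped_edges_off W P x : x \in W ->
  hE (grouped W P) :\: incid (grouped W P) x =
  [set group_edge W g | g in P :\: touching P x].
Proof.
move=> xW; apply/setP=> e; rewrite !inE; apply/andP/imsetP.
- case=> + eE; rewrite eE /= => xe; case/imsetP: eE => g gP ege.
  by exists g; rewrite // !inE gP andbT -(mem_group_edge g xW) -ege.
- case=> g /[!inE] /andP [+ gP] ->; rewrite gP /= => xg.
  by rewrite imset_f // mem_group_edge.
Qed.

Lemma dil_reach_merge W P x : x \in W ->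
  dil_reach (grouped W P) (grouped (W :\ x) (merge_at P x)).
Proof.
move=> xW; apply: DR_step (Merge (H := grouped W P) xW) (dil_step_reach _).
set M := Hypergraph _ _.
have -> : grouped (W :\ x) (merge_at P x) =
    Hypergraph (hV M :\ x) [set e :\ x | e in hE M]; last exact: DelVertex.
rewrite /grouped /M /merge_at /= grouped_edges_off // incid_grouped //.
rewrite !imsetU !imset_set1 -!imset_comp; congr Hypergraph; congr (_ :|: _).
  by apply/setP=> e; rewrite (eq_imset _ (group_edgeD1 W ^~ x)).
by rewrite bigcup_group_edges -!group_edgeD1 setDDl setUid.
Qed.

Lemma dil_reach_merge_seq W P s : uniq s -> {subset s <= W} ->
  dil_reach (grouped W P) (grouped (W :\: [set x in s]) (foldl merge_at P s)).
Proof.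
elim: s W P => [|x s IH] W P /=.
  have -> : [set x in [::]] = set0 :> {set U} by apply/setP=> y; rewrite !inE.
  by rewrite setD0 => _ _; apply: DR_refl.
case/andP=> xs us sW; have xW : x \in W by apply: sW; rewrite inE eqxx.
apply: dil_reach_trans (dil_reach_merge P xW) _.
have -> : W :\: [set y in x :: s] = W :\ x :\: [set y in s].
  by apply/setP=> y; rewrite !inE negb_or; case: (y \in s); case: (y == x).
apply: IH => // y ys; rewrite !inE sW ?inE ?ys ?orbT // andbT.
by apply: contraNneq xs => <-.
Qed.

End GroupedHypergraph.

Arguments merge_at {U} P x.

Section BranchPartition.

Variables (T U : finType) (VG : {set T}) (EH : {set {set U}}).
Variable mu : T -> {set {set U}}.
Hypothesis mu_inj :
  forall u v e, u \in VG -> v \in VG -> e \in mu u -> e \in mu v -> u = v.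

Implicit Types (g : {set {set U}}) (P : {set {set {set U}}}).

Definition branch_partition P :=
  [/\ cover P = EH,
      forall g1 g2 e, g1 \in P -> g2 \in P -> e \in g1 -> e \in g2 -> g1 = g2 &
      forall g u e, g \in P -> u \in VG -> e \in g -> e \in mu u -> g \subset mu u].

Definition same_group P a b := exists2 g, g \in P & (a \in g) && (b \in g).

Lemma branch_partition_singletons : branch_partition [set [set e] | e in EH].
Proof.
split.
- rewrite cover_imset; apply/setP=> e.
  by apply/bigcupP/idP => [[f fE /set1P -> //] | eE]; exists e; rewrite ?inE.
- by move=> _ _ e /imsetP [e1 _ ->] /imsetP [e2 _ ->] /set1P -> /set1P ->.
- by move=> _ u e /imsetP [f _ ->] _ /set1P -> eu; rewrite sub1set.
Qed.

Lemma same_group_merge P x a b :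
  same_group P a b -> same_group (merge_at P x) a b.
Proof.
case=> g gP /andP [ag bg]; have [xg | xg] := boolP (x \in cover g).
- exists (cover (touching P x)); first by rewrite in_merge_at eqxx.
  by apply/andP; split; apply/bigcupP; exists g; rewrite ?inE ?gP.
- by exists g; rewrite ?in_merge_at ?gP ?xg ?orbT ?ag.
Qed.

Lemma same_group_foldl P s a b :
  same_group P a b -> same_group (foldl merge_at P s) a b.
Proof. by elim: s P => //= x s IH P /(same_group_merge x) /IH. Qed.

Lemma same_group_merge_at P x a b : cover P = EH ->
  a \in EH -> b \in EH -> x \in a -> x \in b -> same_group (merge_at P x) a b.
Proof.
move=> covP aE bE xa xb.
exists (cover (touching P x)); first by rewrite in_merge_at eqxx.
have touched e : e \in EH -> x \in e -> e \in cover (touching P x).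
  rewrite -covP => /bigcupP [g gP eg] xe; apply/bigcupP; exists g => //.
  by rewrite inE gP; apply/bigcupP; exists e.
by rewrite !touched.
Qed.

Lemma branch_partition_merge P x :
  (exists2 u0, u0 \in VG & forall e, e \in EH -> x \in e -> e \in mu u0) ->
  branch_partition P -> branch_partition (merge_at P x).
Proof.
move=> [u0 u0G xu0] [covP disP homP]; set N := cover (touching P x).
have N_sub : N \subset mu u0.
  apply/bigcupsP => g /[!inE] /andP [gP /bigcupP [e eg xe]].
  apply: (homP g u0 e) => //; apply: xu0 xe.
  by rewrite -covP; apply/bigcupP; exists g.
have N_disj g e : g \in P -> x \notin cover g -> e \in N -> e \in g -> False.
  move=> gP xg /bigcupP [g' /[!inE] /andP [g'P xg'] eg'] eg.
  by move: xg; rewrite -(disP g' g e g'P gP eg' eg) xg'.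
split.
- rewrite -covP; apply/setP=> e; apply/bigcupP/bigcupP.
    case=> g /[!in_merge_at] /orP [/eqP -> | /andP [gP _] eg]; last by exists g.
    by case/bigcupP=> g' /[!inE] /andP [g'P _] eg'; exists g'.
  case=> g gP eg; have [xg | xg] := boolP (x \in cover g).
    exists N; first by rewrite in_merge_at eqxx.
    by apply/bigcupP; exists g; rewrite ?inE ?gP.
  by exists g; rewrite ?in_merge_at ?gP ?xg ?orbT.
- move=> g1 g2 e; rewrite !in_merge_at.
  case/orP=> [/eqP -> | /andP [g1P xg1]] /orP [/eqP -> | /andP [g2P xg2]] e1 e2 //.
  + by case: (N_disj g2 e g2P xg2 e1 e2).
  + by case: (N_disj g1 e g1P xg1 e2 e1).
  + exact: disP e1 e2.
- move=> g u e; rewrite in_merge_at => /orP [/eqP -> | /andP [gP _]]; last exact: homP.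
  by move=> uG eN eu; rewrite (mu_inj uG u0G eu (subsetP N_sub e eN)).
Qed.

Lemma branch_partition_merge_seq P s :
  (forall x, x \in s ->
     exists2 u0, u0 \in VG & forall e, e \in EH -> x \in e -> e \in mu u0) ->
  branch_partition P ->
  branch_partition (foldl merge_at P s) /\
  forall x a b, x \in s -> a \in EH -> b \in EH -> x \in a -> x \in b ->
    same_group (foldl merge_at P s) a b.
Proof.
elim: s P => [|x s IH] P /= s_int partP; first by split.
have partP' := branch_partition_merge (s_int x (mem_head x s)) partP.
have [y ys|partPs sameP] := IH _ _ partP'; first by apply: s_int; rewrite inE ys orbT.
split=> // y a b /[!inE] /orP [/eqP -> | ys]; last exact: sameP.
move=> aE bE xa xb; apply: same_group_foldl.
by case: partP => covP _ _; apply: same_group_merge_at.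
Qed.

End BranchPartition.

Section MinorToDilution.

Variables (T U : finType) (G : hypergraph T) (H : hypergraph U).
Variable mu : T -> {set {set U}}.
Hypotheses (wfG : wf G) (G_edge2 : forall e, e \in hE G -> #|e| = 2).
Hypotheses (wfH : wf H) (degH : degree H <= 2).
Hypothesis mu_sub : forall v, v \in hV G -> mu v \subset hE H.
Hypothesis mu_conn : forall v, v \in hV G -> connected_set (dual H) (mu v).
Hypothesis mu_disj :
  forall u v, u \in hV G -> v \in hV G -> u != v -> [disjoint mu u & mu v].
Hypothesis mu_adj : forall u v, u \in hV G -> v \in hV G -> primal_adj G u v ->
  exists x y, [/\ x \in mu u, y \in mu v & primal_adj (dual H) x y].

Lemma mu_inj u v e : u \in hV G -> v \in hV G -> e \in mu u -> e \in mu v -> u = v.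
Proof.
move=> uG vG eu; apply: contraTeq => uv.
by rewrite (disjointFr (mu_disj uG vG uv) eu).
Qed.

Lemma incid_pair z a b : z \in hV H -> a != b ->
  a \in incid H z -> b \in incid H z -> incid H z = [set a; b].
Proof.
move=> zH ab az bz; apply/esym/eqP; rewrite eqEcard cards2 ab.
have -> : #|incid H z| <= 2 by apply: leq_trans degH; apply: leq_bigmax_cond.
by rewrite andbT; apply/subsetP=> c /set2P [] ->.
Qed.

Definition internal z := [exists u in hV G, incid H z \subset mu u].

Definition branches_at z := [set v in hV G | [exists e in mu v, z \in e]].

Definition connector e z := (z \in hV H) && (branches_at z == e).

Definition connectors :=
  [set z | [exists e in hE G, [pick z' | connector e z'] == Some z]].

Lemma internal_branch z : internal z ->
  exists2 u, u \in hV G & forall e, e \in hE H -> z \in e -> e \in mu u.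
Proof.
case/exists_inP=> u uG zu; exists u => // e eE ze.
by apply: (subsetP zu); rewrite inE eE ze.
Qed.

Lemma dual_adj_internal u a b : u \in hV G -> a \in mu u -> b \in mu u ->
  primal_adj (dual H) a b -> exists z, [/\ z \in hV H, internal z, z \in a & z \in b].
Proof.
move=> uG au bu /andP [ab /exists_inP [_ /imsetP [z zH ->] /andP [az bz]]].
have [[_ za] [_ zb]] := (setIdP az, setIdP bz).
exists z; split=> //; apply/exists_inP; exists u; rewrite // (incid_pair zH ab az bz).
by apply/subsetP=> c /set2P [] ->.
Qed.

Lemma connector_exists e : e \in hE G -> exists z, connector e z.
Proof.
move=> eG; have /cards2P [u [w [uw euw]]] : #|e| == 2 by rewrite G_edge2.
have uG : u \in hV G by apply: (subsetP (wfG eG)); rewrite euw !inE eqxx.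
have wG : w \in hV G by apply: (subsetP (wfG eG)); rewrite euw !inE eqxx orbT.
have adj : primal_adj G u w.
  by rewrite /primal_adj uw; apply/exists_inP; exists e; rewrite // euw !inE !eqxx orbT.
have [a [b [au bw /andP [ab /exists_inP [_ /imsetP [z zH ->] /andP [az bz]]]]]] :=
  mu_adj uG wG adj.
have zab := incid_pair zH ab az bz.
have [[_ za] [_ zb]] := (setIdP az, setIdP bz).
exists z; rewrite /connector zH euw; apply/eqP/setP=> v; rewrite !inE.
apply/andP/orP => [[vG /exists_inP [c cv zc]] | [] /eqP ->].
- have : c \in incid H z by rewrite inE (subsetP (mu_sub vG)).
  rewrite zab => /set2P [] ec; [left | right]; apply/eqP.
    by apply: (mu_inj vG uG cv); rewrite ec.
  by apply: (mu_inj vG wG cv); rewrite ec.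
- by split=> //; apply/exists_inP; exists a.
- by split=> //; apply/exists_inP; exists b.
Qed.

Lemma connector_incid e z : e \in hE G -> connector e z ->
  {in incid H z, forall f, exists2 u, u \in hV G & f \in mu u}.
Proof.
move=> eG /andP [zH /eqP ze].
have /cards2P [u [w [uw euw]]] : #|e| == 2 by rewrite G_edge2.
have : u \in branches_at z by rewrite ze euw !inE eqxx.
rewrite inE => /andP [uG /exists_inP [a au za]].
have : w \in branches_at z by rewrite ze euw !inE eqxx orbT.
rewrite inE => /andP [wG /exists_inP [b bw zb]].
have ab : a != b by apply: contra uw => /eqP ab; rewrite (mu_inj uG wG au) ?ab.
have az : a \in incid H z by rewrite inE (subsetP (mu_sub uG)).
have bz : b \in incid H z by rewrite inE (subsetP (mu_sub wG)).
by move=> f; rewrite (incid_pair zH ab az bz) => /set2P [] ->; [exists u | exists w].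
Qed.

Lemma connector_not_internal e z : e \in hE G -> connector e z -> ~~ internal z.
Proof.
move=> eG /andP [_ /eqP ze]; apply/negP => /exists_inP [u0 u0G zu0].
have : branches_at z \subset [set u0].
  apply/subsetP=> v /[!inE] /andP [vG /exists_inP [a av za]].
  apply/eqP; apply: (mu_inj vG u0G av); apply: (subsetP zu0).
  by rewrite inE (subsetP (mu_sub vG)).
by move/subset_leq_card; rewrite cards1 ze G_edge2.
Qed.

Lemma pick_connector e z : [pick z' | connector e z'] = Some z -> connector e z.
Proof. by case: pickP => // z' + [<-]. Qed.

Lemma connectorsP z : reflect
  (exists2 e, e \in hE G & [pick z' | connector e z'] = Some z) (z \in connectors).
Proof.
rewrite inE; apply: (iffP exists_inP) => [[e eG /eqP] | [e eG pz]]; first by exists e.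
by exists e; rewrite ?pz.
Qed.

Lemma connectors_connector z : z \in connectors ->
  exists2 e, e \in hE G & connector e z.
Proof. by case/connectorsP=> e eG /pick_connector; exists e. Qed.

Lemma connectors_onto e : e \in hE G ->
  exists2 z, z \in connectors & branches_at z = e.
Proof.
move=> eG; case pz: [pick z | connector e z] => [z|].
  by exists z; [apply/connectorsP; exists e | case/andP: (pick_connector pz) => _ /eqP].
by have [z ez] := connector_exists eG; move: pz; case: pickP => // /(_ z); rewrite ez.
Qed.

Lemma connectors_inj : {in connectors &, injective branches_at}.
Proof.
move=> z1 z2 /connectorsP [e1 _ p1] /connectorsP [e2 _ p2] bz.
have /andP [_ /eqP b1] := pick_connector p1.
have /andP [_ /eqP b2] := pick_connector p2.
by move: p1; rewrite -b1 bz b2 p2 => -[].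
Qed.

Definition internals := [set z in hV H | internal z].

Definition final_groups := foldl merge_at [set [set e] | e in hE H] (enum internals).

Lemma final_groups_spec :
  branch_partition (hV G) (hE H) mu final_groups /\
  forall z a b, z \in internals -> a \in hE H -> b \in hE H -> z \in a -> z \in b ->
    same_group final_groups a b.
Proof.
have [|partF sameF] := branch_partition_merge_seq (s := enum internals) mu_inj
  _ (branch_partition_singletons (hV G) (hE H) mu).
  by move=> z; rewrite mem_enum inE => /andP [_ /internal_branch].
by split=> // z a b; rewrite -mem_enum; apply: sameF.
Qed.

Lemma same_group_branch u a b : u \in hV G -> a \in mu u -> b \in mu u ->
  same_group final_groups a b.
Proof.
move=> uG au bu; have [[covF disF _] sameF] := final_groups_spec.
have /bigcupP [g gF ag] : a \in cover final_groups.
  by rewrite covF (subsetP (mu_sub uG)).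
exists g; rewrite // ag /=.
have [_ conn] := mu_conn uG; rewrite -(closed_connect _ (conn a b au bu)) //.
move=> c d /and3P [cu du /(dual_adj_internal uG cu du) [z [zH zI zc zd]]].
have [g' g'F /andP [cg' dg']] : same_group final_groups c d.
  by apply: (sameF z); rewrite ?inE ?zH ?zI ?(subsetP (mu_sub uG)).
by apply/idP/idP => [cg | dg]; [rewrite (disF g g' c) | rewrite (disF g g' d)].
Qed.

Lemma branch_in_final_groups u : u \in hV G -> mu u \in final_groups.
Proof.
move=> uG; have [[covF disF homF] _] := final_groups_spec.
have [/set0Pn [a au] _] := mu_conn uG.
have /bigcupP [g gF ag] : a \in cover final_groups.
  by rewrite covF (subsetP (mu_sub uG)).
suff -> : mu u = g by [].
apply/eqP; rewrite eqEsubset (homF g u a) // andbT; apply/subsetP=> b bu.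
have [g' g'F /andP [ag' bg']] := same_group_branch uG au bu.
by rewrite (disF g g' a).
Qed.

Definition final_edges := [set group_edge connectors g | g in final_groups].

Definition branch_edges := [set group_edge connectors (mu u) | u in hV G].

Lemma branch_edges_sub : branch_edges \subset final_edges.
Proof.
apply/subsetP=> _ /imsetP [u uG ->].
by apply: imset_f; apply: branch_in_final_groups.
Qed.

Lemma final_edges_nonempty_sub : final_edges :\ set0 \subset branch_edges.
Proof.
have [[covF disF _] _] := final_groups_spec.
apply/subsetP=> b /setD1P [+ /imsetP [g gF bg]]; rewrite bg.
case/set0Pn=> z /setIP [/bigcupP [f fg zf] zK].
have fz : f \in incid H z by rewrite inE -covF zf andbT; apply/bigcupP; exists g.
have [e eG ez] := connectors_connector zK.
have [u uG fu] := connector_incid eG ez fz.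
by rewrite (disF g (mu u) f gF (branch_in_final_groups uG) fg fu); apply: imset_f.
Qed.

Lemma dil_reach_branch_edges : hV G != set0 ->
  dil_reach H (Hypergraph connectors branch_edges).
Proof.
move=> VG0; rewrite -{1}(grouped_singletons wfH).
have internalsE : [set z in enum internals] = internals.
  by apply/setP=> z; rewrite inE mem_enum.
have int_sub : {subset enum internals <= hV H}.
  by move=> z; rewrite mem_enum inE => /andP [].
have := dil_reach_merge_seq [set [set e] | e in hE H] (enum_uniq internals) int_sub.
rewrite internalsE => merged; apply: dil_reach_trans merged _.
apply: dil_reach_trans (dil_reach_grouped_sub _ _) _.
  apply/subsetP=> z zK; have [e eG /[dup] ez /andP [zH _]] := connectors_connector zK.
  by rewrite !inE zH (negbTE (connector_not_internal eG ez)).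
apply: dil_reach_drop_empty_edge branch_edges_sub final_edges_nonempty_sub _.
by rewrite imset_eq0.
Qed.

Lemma branches_at_branch_edge u : u \in hV G ->
  branches_at @: group_edge connectors (mu u) = incid G u.
Proof.
move=> uG; apply/setP=> e; rewrite inE; apply/imsetP/andP.
- case=> z /setIP [/bigcupP [a au za] zK] ->.
  have [e' eG /andP [_ /eqP ze']] := connectors_connector zK.
  split; first by rewrite ze'.
  by rewrite /branches_at inE uG; apply/exists_inP; exists a.
- case=> eG ue; have [z zK ze] := connectors_onto eG; exists z => //.
  move: ue; rewrite -ze /branches_at inE uG => /exists_inP [a au za].
  by apply/setIP; split=> //; apply/bigcupP; exists a.
Qed.

Lemma branch_edges_iso : iso (Hypergraph connectors branch_edges) (dual G).
Proof.
exists branches_at; split=> /=; first exact: connectors_inj.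
  apply/setP=> e; apply/imsetP/idP => [[z zK ->] | eG].
    by have [e' eG /andP [_ /eqP ->]] := connectors_connector zK.
  by have [z zK <-] := connectors_onto eG; exists z.
rewrite /branch_edges -imset_comp; apply: eq_in_imset => u uG.
exact: branches_at_branch_edge.
Qed.

End MinorToDilution.

Theorem lemma4p3 (T U : finType) (G : hypergraph T) (H : hypergraph U) :
  is_graph G -> connected G ->
  wf H -> degree H = 2 ->
  minor G (dual H) ->
  dilution (dual G) H.
Proof.
(* Connectivity of G is only used to make G nonempty: otherwise an empty edge left
   over from H could not be deleted. *)
move=> [wfG G_edge2] [VG0 _] wfH degH [mu [mu_sub mu_conn mu_disj mu_adj]].
have degH2 : degree H <= 2 by rewrite degH.
exists (Hypergraph (connectors G H mu) (branch_edges G H mu)); split.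
  by apply: dil_reach_branch_edges.
by apply: branch_edges_iso.
Qed.
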